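(* Fix a policy (choosing $A_t$ as a function of the observations available before round $t$) and two parameter vectors $\theta,\theta'\in(0,1)^K$ sharing the same delay CDF $\tau$. Let $\ell_T$ be the log-likelihood ratio $\log\big(p_\theta(\mathcal O_T)/p_{\theta'}(\mathcal O_T)\big)$ of all observations $\mathcal O_T$ collected up to round $T$. In the censored model with threshold $m$, \[ \mathbb{E}_\theta[\ell_T]=\mathbb{E}_\theta\Big[\sum_{s=1}^{T-m}d(\theta_{A_s}\tau_m,\theta'_{A_s}\tau_m)+\sum_{s=T-m+1}^{T}d(\theta_{A_s}\tau_{T-s},\theta'_{A_s}\tau_{T-s})\Big], \] and in the uncensored model, \[ \mathbb{E}_\theta[\ell_T]=\mathbb{E}_\theta\Big[\sum_{s=1}^{T}d(\theta_{A_s}\tau_{T-s},\theta'_{A_s}\tau_{T-s})\Big]. \]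
   Context: Delayed-feedback bandit model: $K$ arms with conversion rates $\theta_1,\dots,\theta_K$; a delay distribution on $\mathbb{N}$ with CDF $\tau_d=\mathbb{P}(D\le d)$. At each round $t$ the learner picks $A_t$ based on past observations; this triggers, conditionally independently given the past, $C_t\sim\mathrm{Bernoulli}(\theta_{A_t})$ and $D_t\sim\tau$. Let $X_{s,t}=C_s\mathbf{1}\{D_s\le t-s\}$ for $s\le t$. Uncensored model: at round $t$ the learner observes all $X_{s,t}$, $1\le s\le t$; so the observations up to round $T$ are $(X_{s,t})_{1\le s\le t\le T}$. Censored model with threshold $m\ge1$: at round $t$ the learner observes $X_{s,t}$ only for $t-m\le s\le t$; so the observations up to $T$ are $(X_{s,t})_{1\le t\le T,\,t-m\le s\le t}$. $\mathbb{E}_\theta$ denotes expectation when the conversion rates are $\theta$. $d(p,q)=p\log(p/q)+(1-p)\log((1-p)/(1-q))$ with the convention $d(0,0)=0$. *)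

From HB Require Import structures.
From mathcomp Require Import all_boot all_order all_algebra.
From mathcomp Require Import all_classical all_reals all_analysis.
Set Implicit Arguments. Unset Strict Implicit. Unset Printing Implicit Defensive.
Import Order.TTheory GRing.Theory Num.Theory.
Local Open Scope ring_scope.

Section DelayedBandit.
Variable R : realType.

(* Binary KL divergence d(p,q); with MathComp's convention ln x = 0 for
   x <= 0 one gets d(0,0) = 0, as in the paper. *)
Definition kl (p q : R) : R :=
  p * ln (p / q) + (1 - p) * ln ((1 - p) / (1 - q)).

Definition bern (p : R) (c : bool) : R := if c then p else 1 - p.

(* Delay pmf on nat derived from the CDF tau : tau_d = P(D <= d). *)
Definition delay_pmf (tau : nat -> R) (d : nat) : R :=
  if d is d'.+1 then tau d - tau d' else tau 0%N.

(* An outcome (realisation) is the sequence w of pairs (C_s, D_s),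
   with w`_(s-1) = (C_s, D_s) for rounds s = 1, 2, ...  *)
Definition outcome := seq (bool * nat).

Definition Xobs (w : outcome) (s t : nat) : bool :=
  let: (c, d) := nth (false, 0%N) w s.-1 in c && (d <= t - s)%N.

(* Observation model: None = uncensored; Some m = censored with threshold m.
   lowest index s observed at round t (indices start at 1). *)
Definition obs_lo (model : option nat) (t : nat) : nat :=
  if model is Some m then maxn 1 (t - m) else 1%N.

Definition obs_round (model : option nat) (w : outcome) (t : nat) : seq bool :=
  [seq Xobs w s t | s <- iota (obs_lo model t) (t.+1 - obs_lo model t)].

Definition obs_upto (model : option nat) (w : outcome) (n : nat) : seq (seq bool) :=
  [seq obs_round model w r | r <- iota 1 n].

(* A (deterministic) policy maps the observations of rounds 1..t-1 to A_t. *)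
Definition policy (K : nat) := seq (seq bool) -> 'I_K.

Definition action K (pol : policy K) model (w : outcome) (t : nat) : 'I_K :=
  pol (obs_upto model w t.-1).

(* Expectation E_theta[f(w)] over n further rounds, starting from the prefix h:
   at the next round t = size h + 1, A_t is chosen by the policy, then
   C_t ~ Bernoulli(theta_{A_t}) and D_t ~ tau, independently of each other
   given the past. *)
Fixpoint Exp K (pol : policy K) model (theta : 'I_K -> R) (tau : nat -> R)
  (f : outcome -> R) (n : nat) (h : outcome) : R :=
  match n with
  | 0%N => f h
  | n'.+1 =>
      let a := action pol model h (size h).+1 in
      \sum_(c : bool)
        bern (theta a) c *
        limn (fun N => \sum_(0 <= d < N)
                 delay_pmf tau d * Exp pol model theta tau f n' (rcons h (c, d)))
  end.

Definition ExpT K (pol : policy K) model theta tau (T : nat) (f : outcome -> R) : R :=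
  Exp pol model theta tau f T [::].

Definition lik K (pol : policy K) model theta tau (T : nat) (o : seq (seq bool)) : R :=
  ExpT pol model theta tau T (fun w => ((obs_upto model w T == o) : nat)%:R).

Definition llr K (pol : policy K) model theta theta' tau (T : nat) (w : outcome) : R :=
  ln (lik pol model theta tau T (obs_upto model w T) /
      lik pol model theta' tau T (obs_upto model w T)).

End DelayedBandit.

From HB Require Import structures.
From mathcomp Require Import all_boot all_order all_algebra.
From mathcomp Require Import all_classical all_reals all_analysis.
From mathcomp Require Import zify ring lra.
Import Order.TTheory GRing.Theory Num.Theory numFieldTopology.Exports.
Local Open Scope ring_scope.

(* The observations up to round T depend on the outcome (C_s, D_s) of round s
   only through its trace: D_s if C_s = 1 and D_s is within the horizon of s
   (min(m, T - s) under censoring, T - s otherwise), and nothing else.  Given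
   the past, the trace of round s is d with probability theta_a P(D = d) and
   nothing with probability 1 - theta_a tau_h, where a = A_s and h is the
   horizon.  Distinct traces of positive probability produce distinct
   observations, so the likelihood of the observations is the product of these
   one-round probabilities and l_T is the sum of the one-round log-ratios.  The
   delay probability cancels in each ratio, so the conditional mean of the
   one-round term is d(theta_a tau_h, theta'_a tau_h): l_T minus the sum of
   these divergences is a sum of martingale increments, of mean zero. *)

Lemma mulr_ln_scaled_ratio (R : realType) (a b x : R) :
  a * x * ln (a * x / (b * x)) = x * (a * ln (a / b)).
Proof.
have [->|x_neq0] := eqVneq x 0; first by rewrite !(mulr0, mul0r).
by rewrite -mulf_div divff // mulr1 mulrCA mulrA.
Qed.

Lemma ln_prod (R : realType) (I : eqType) (r : seq I) (F : I -> R) :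
  (forall i, i \in r -> 0 < F i) -> ln (\prod_(i <- r) F i) = \sum_(i <- r) ln (F i).
Proof.
elim: r => [|i r IH] F_gt0; first by rewrite !big_nil ln1.
have F_gt0_tail j : j \in r -> 0 < F j by move=> jr; rewrite F_gt0 // in_cons jr orbT.
rewrite !big_cons lnM ?IH ?posrE ?F_gt0 ?mem_head //.
by rewrite big_seq; apply: prodr_gt0 => j /F_gt0_tail.
Qed.

Section DelayDistribution.
Context {R : realType} {tau : nat -> R}.
Hypothesis tau_cvg : (tau @ \oo --> (1 : R))%classic.

Lemma sum_delay_pmf n : \sum_(0 <= d < n.+1) delay_pmf tau d = tau n.
Proof.
elim: n => [|n IH]; first by rewrite big_nat1.
by rewrite big_nat_recr //= IH addrC subrK.
Qed.

Lemma lim_delay_series (F : nat -> R) M c : (forall d, (M < d)%N -> F d = c) ->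
  limn (fun N => \sum_(0 <= d < N) delay_pmf tau d * F d)
  = \sum_(0 <= d < M.+1) delay_pmf tau d * F d + c * (1 - tau M).
Proof.
move=> Fc; set S := \sum_(0 <= d < M.+1) _.
have partial N : (M < N)%N ->
    \sum_(0 <= d < N) delay_pmf tau d * F d = S + c * (tau N.-1 - tau M).
  move=> MN; rewrite (big_cat_nat _ (n := M.+1)) //; congr (_ + _).
  rewrite (eq_big_nat _ _ (F2 := fun d => c * delay_pmf tau d)); last first.
    by move=> d /andP[Md _]; rewrite Fc // mulrC.
  rewrite -mulr_sumr -(sum_delay_pmf N.-1) -(sum_delay_pmf M) prednK; last lia.
  by rewrite [X in _ = _ * (X - _)](big_cat_nat _ (n := M.+1)) //= addrAC subrr add0r.
apply: cvg_lim; first exact: Rhausdorff.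
have lim_partial : ((fun N => S + c * (tau N.-1 - tau M)) @ \oo --> S + c * (1 - tau M))%classic.
  rewrite -cvg_shiftS /=.
  by apply: cvgD; [exact: cvg_cst | apply: cvgM; [exact: cvg_cst | apply: cvgB => //; exact: cvg_cst]].
apply: cvg_trans lim_partial; apply: near_eq_cvg.
by exists M.+1 => // N /= MN; rewrite partial.
Qed.

End DelayDistribution.

Section Traces.
Variables (R : realType) (K T : nat) (tau : nat -> R) (pol : policy K) (model : option nat).
Hypothesis tau0 : 0 <= tau 0%N.
Hypothesis tau_mono : forall d, tau d <= tau d.+1.
Hypothesis tau_le1 : forall d, tau d <= 1.
Hypothesis tau_cvg : (tau @ \oo --> (1 : R))%classic.

Definition horizon s : nat := if model is Some m then minn m (T - s) else (T - s)%N.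

Definition trace_at s (x : bool * nat) : option nat :=
  if x.1 && (x.2 <= horizon s)%N then Some x.2 else None.

Definition trace (w : outcome) : seq (option nat) :=
  [seq trace_at i.+1 (nth (false, 0%N) w i) | i <- iota 0 (size w)].

Definition untrace (ys : seq (option nat)) : outcome :=
  [seq if y is Some d then (true, d) else (false, 0%N) | y <- ys].

Definition trace_obs (y : option nat) k : bool := if y is Some d then (d <= k)%N else false.

Definition trace_support s : seq (option nat) :=
  None :: [seq Some d | d <- iota 0 (horizon s).+1].

Definition trace_pmf (p : R) s (y : option nat) : R :=
  if y is Some d then p * delay_pmf tau d else 1 - p * tau (horizon s).

Definition admissible_at s (y : option nat) : bool :=
  if y is Some d then (d <= horizon s)%N && (0 < delay_pmf tau d) else true.

Definition admissible (ys : seq (option nat)) : Prop :=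
  forall i, (i < size ys)%N -> admissible_at i.+1 (nth None ys i).

Definition trace_action (hy : seq (option nat)) : 'I_K :=
  pol (obs_upto model (untrace hy) (size hy)).

Fixpoint ExpTrace (th : 'I_K -> R) (g : seq (option nat) -> R) n hy : R :=
  if n is n'.+1 then
    \sum_(y <- trace_support (size hy).+1)
      trace_pmf (th (trace_action hy)) (size hy).+1 y * ExpTrace th g n' (rcons hy y)
  else g hy.

Lemma size_trace w : size (trace w) = size w.
Proof. by rewrite size_map size_iota. Qed.

Lemma trace_rcons w x : trace (rcons w x) = rcons (trace w) (trace_at (size w).+1 x).
Proof.
rewrite /trace size_rcons -addn1 iotaD map_cat add0n addn1 cats1 nth_rcons ltnn eqxx.
congr rcons; apply/eq_in_map => i; rewrite mem_iota add0n => /andP[_ hi].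
by rewrite nth_rcons hi.
Qed.

Lemma Xobs_untrace ys s t : Xobs (untrace ys) s t = trace_obs (nth None ys s.-1) (t - s).
Proof.
rewrite /Xobs /untrace; case: (ltnP s.-1 (size ys)) => hs.
  by rewrite (nth_map None) //; case: nth.
by rewrite !nth_default ?size_map.
Qed.

Lemma Xobs_untrace_trace w s t : (0 < s)%N -> (t - s <= horizon s)%N ->
  Xobs (untrace (trace w)) s t = Xobs w s t.
Proof.
move=> s_gt0 hs; rewrite Xobs_untrace /Xobs /trace.
case: (ltnP s.-1 (size w)) => s_le; last by rewrite !nth_default ?size_map ?size_iota.
rewrite (nth_map 0%N) ?size_iota // nth_iota // add0n prednK //.
case: nth => [[] d] //=; rewrite /trace_at /=; case: leqP => //= hd.
by apply/esym/negbTE; rewrite -ltnNge (leq_ltn_trans hs hd).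
Qed.

Lemma observed_within_horizon s t : (t <= T)%N -> (obs_lo model t <= s)%N ->
  (s <= t)%N -> (0 < s)%N /\ (t - s <= horizon s)%N.
Proof. by rewrite /obs_lo /horizon; case: model => [m|]; lia. Qed.

Lemma obs_upto_untrace_trace w n : (n <= T)%N ->
  obs_upto model (untrace (trace w)) n = obs_upto model w n.
Proof.
move=> nT; apply/eq_in_map => t; rewrite mem_iota => /andP[t_gt0 tn].
apply/eq_in_map => s; rewrite mem_iota subnKC => [/andP[lo_s s_t]|]; last first.
  by rewrite /obs_lo; case: model; lia.
have [|s_gt0 hs] := @observed_within_horizon s t _ lo_s s_t; first lia.
exact: Xobs_untrace_trace.
Qed.

Lemma obs_upto_take w n : obs_upto model (take n w) n = obs_upto model w n.
Proof.
apply/eq_in_map => t; rewrite mem_iota => /andP[t_gt0 tn].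
apply/eq_in_map => s; rewrite mem_iota => /andP[lo_s s_t].
rewrite /Xobs nth_take //; rewrite /obs_lo in lo_s s_t; case: model lo_s s_t; lia.
Qed.

Lemma action_untrace ys i : (i <= size ys)%N ->
  action pol model (untrace ys) i.+1 = trace_action (take i ys).
Proof.
move=> hi; rewrite /action /trace_action size_takel //= /untrace map_take.
by rewrite obs_upto_take.
Qed.

Lemma trace_action_trace w : (size w <= T)%N ->
  trace_action (trace w) = action pol model w (size w).+1.
Proof. by move=> wT; rewrite /trace_action size_trace obs_upto_untrace_trace. Qed.

Lemma Xobs_obs_upto w s t : (0 < s)%N -> (s <= t)%N -> (t <= T)%N ->
  (obs_lo model t <= s)%N ->
  Xobs w s t = nth false (nth [::] (obs_upto model w T) t.-1) (s - obs_lo model t).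
Proof.
move=> s_gt0 s_t tT lo_s.
rewrite (nth_map 0%N) ?size_iota; last lia.
rewrite nth_iota; last lia.
rewrite add1n prednK; last lia.
rewrite /obs_round (nth_map 0%N) ?size_iota; last lia.
by rewrite nth_iota ?subnKC //; lia.
Qed.

Lemma eq_trace_obs s y1 y2 : admissible_at s y1 -> admissible_at s y2 ->
  (forall k, (k <= horizon s)%N -> trace_obs y1 k = trace_obs y2 k) -> y1 = y2.
Proof.
case: y1 => [d1|]; case: y2 => [d2|] //=.
- move=> /andP[d1_le _] /andP[d2_le _] eq_obs.
  have := eq_obs d1 d1_le; have := eq_obs d2 d2_le; rewrite !leqnn => d12 d21.
  by congr Some; apply/eqP; rewrite eqn_leq d12 -d21.
- by move=> /andP[d1_le _] _ /(_ d1 d1_le); rewrite leqnn.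
- by move=> _ /andP[d2_le _] /(_ d2 d2_le); rewrite leqnn.
Qed.

Lemma obs_upto_untrace_inj ys1 ys2 : size ys1 = T -> size ys2 = T ->
  admissible ys1 -> admissible ys2 ->
  obs_upto model (untrace ys1) T = obs_upto model (untrace ys2) T -> ys1 = ys2.
Proof.
move=> size1 size2 adm1 adm2 eq_obs; apply: (@eq_from_nth _ None); first by rewrite size1.
move=> i; rewrite size1 => iT.
apply: (@eq_trace_obs i.+1); [by apply: adm1; rewrite size1 | by apply: adm2; rewrite size2 |].
move=> k k_le; have := Xobs_untrace ys1 i.+1 (i.+1 + k); have := Xobs_untrace ys2 i.+1 (i.+1 + k).
rewrite /= addKn => <- <-.
by rewrite !(@Xobs_obs_upto _ i.+1 (i.+1 + k)) ?eq_obs //; rewrite /obs_lo /horizon in k_le *;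
  case: model k_le; lia.
Qed.

Lemma delay_pmf_ge0 d : 0 <= delay_pmf tau d.
Proof. by case: d => [|d] //=; rewrite subr_ge0. Qed.

Lemma mem_trace_support s y :
  (y \in trace_support s) = if y is Some d then (d <= horizon s)%N else true.
Proof.
rewrite in_cons; case: y => [d|] //.
by rewrite -[Some d == None]/false (mem_map Some_inj) mem_iota ltnS.
Qed.

Lemma uniq_trace_support s : uniq (trace_support s).
Proof.
rewrite cons_uniq (map_inj_uniq Some_inj) iota_uniq andbT.
by apply/mapP => -[].
Qed.

Lemma admissible_at_support s y : admissible_at s y -> y \in trace_support s.
Proof. by rewrite mem_trace_support; case: y => //= d /andP[]. Qed.

Lemma sum_delay_pmf_support s :
  \sum_(d <- iota 0 (horizon s).+1) delay_pmf tau d = tau (horizon s).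
Proof. by rewrite -sum_delay_pmf. Qed.

Lemma sum_trace_pmf p s : \sum_(y <- trace_support s) trace_pmf p s y = 1.
Proof. by rewrite big_cons big_map /= -mulr_sumr sum_delay_pmf_support subrK. Qed.

Lemma trace_pmf_gt0 p s y : 0 < p < 1 -> admissible_at s y -> 0 < trace_pmf p s y.
Proof.
case/andP=> p_gt0 p_lt1; case: y => [d /andP[_ pmf_gt0]|_] /=; first exact: mulr_gt0.
by rewrite subr_gt0 (le_lt_trans _ p_lt1) // ger_pMr.
Qed.

Lemma trace_pmf_eq0 p s y : y \in trace_support s -> ~~ admissible_at s y ->
  trace_pmf p s y = 0.
Proof.
rewrite mem_trace_support; case: y => //= d ->; rewrite lt_neqAle delay_pmf_ge0 // andbT.
by rewrite negbK => /eqP <-; rewrite mulr0.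
Qed.

Lemma trace_kl p q s :
  \sum_(y <- trace_support s) trace_pmf p s y * ln (trace_pmf p s y / trace_pmf q s y)
  = kl (p * tau (horizon s)) (q * tau (horizon s)).
Proof.
rewrite big_cons big_map /= /kl addrC; congr (_ + _).
under eq_bigr do rewrite mulr_ln_scaled_ratio.
by rewrite -big_distrl /= sum_delay_pmf_support mulr_ln_scaled_ratio.
Qed.

Lemma sum_bern_delay_trace p s (F : option nat -> R) :
  \sum_(c : bool) bern p c *
    limn (fun N => \sum_(0 <= d < N) delay_pmf tau d * F (trace_at s (c, d)))
  = \sum_(y <- trace_support s) trace_pmf p s y * F y.
Proof.
have beyond c d : (horizon s < d)%N -> F (trace_at s (c, d)) = F None.
  by rewrite /trace_at /= ltnNge => /negbTE ->; rewrite andbF.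
rewrite big_bool /= !(lim_delay_series tau_cvg _ _ _ (beyond _)).
have -> : \sum_(0 <= d < (horizon s).+1) delay_pmf tau d * F (trace_at s (false, d))
    = tau (horizon s) * F None.
  by rewrite -sum_delay_pmf big_distrl; apply: eq_bigr.
set A := \sum_(0 <= d < (horizon s).+1) delay_pmf tau d * F (Some d).
have -> : \sum_(0 <= d < (horizon s).+1) delay_pmf tau d * F (trace_at s (true, d)) = A.
  by apply: eq_big_nat => d /andP[_ d_le]; rewrite /trace_at /= -ltnS d_le.
rewrite big_cons big_map /=.
have -> : \sum_(d <- iota 0 (horizon s).+1) p * delay_pmf tau d * F (Some d) = p * A.
  by rewrite mulr_sumr; apply: eq_bigr => d _; rewrite mulrA.
ring.
Qed.

Lemma admissible_rcons hy y : admissible hy -> admissible_at (size hy).+1 y ->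
  admissible (rcons hy y).
Proof.
move=> adm_hy adm_y i; rewrite size_rcons ltnS nth_rcons leq_eqVlt.
by case: ltngtP => // [/adm_hy|->]; rewrite ?eqxx.
Qed.

Lemma Exp_ExpTrace th f : (forall w, size w = T -> f (untrace (trace w)) = f w) ->
  forall n h, (size h + n = T)%N ->
  Exp pol model th tau f n h = ExpTrace th (f \o untrace) n (trace h).
Proof.
move=> f_trace; elim=> [|n IH] h hT /=; first by rewrite f_trace // -hT addn0.
rewrite size_trace trace_action_trace; last lia.
rewrite -(sum_bern_delay_trace _ _ (fun y => ExpTrace th (f \o untrace) n (rcons (trace h) y))).
apply: eq_bigr => c _; congr (_ * _); congr (lim _); f_equal; apply: funext => N.
by apply: eq_bigr => d _; rewrite IH ?trace_rcons // size_rcons; lia.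
Qed.

Lemma ExpTraceD th g1 g2 n hy :
  ExpTrace th (fun ys => g1 ys + g2 ys) n hy = ExpTrace th g1 n hy + ExpTrace th g2 n hy.
Proof.
elim: n hy => [|n IH] hy //=.
by rewrite -big_split; apply: eq_bigr => y _; rewrite IH mulrDr.
Qed.

Lemma eq_in_ExpTrace th g1 g2 :
  (forall ys, size ys = T -> admissible ys -> g1 ys = g2 ys) ->
  forall n hy, (size hy + n = T)%N -> admissible hy ->
  ExpTrace th g1 n hy = ExpTrace th g2 n hy.
Proof.
move=> eq_g; elim=> [|n IH] hy hT adm_hy /=; first by rewrite eq_g // -hT addn0.
rewrite big_seq [RHS]big_seq; apply: eq_bigr => y y_supp.
have [adm_y|not_adm_y] := boolP (admissible_at (size hy).+1 y).
  by rewrite IH ?size_rcons ?addSnnS //; exact: admissible_rcons.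
by rewrite trace_pmf_eq0 // !mul0r.
Qed.

Lemma ExpTrace_indicator th ys0 : size ys0 = T -> admissible ys0 ->
  forall n hy, (size hy + n = T)%N ->
  ExpTrace th (fun ys => ((ys == ys0) : nat)%:R) n hy =
  if hy == take (size hy) ys0 then
    \prod_(size hy <= i < T) trace_pmf (th (trace_action (take i ys0))) i.+1 (nth None ys0 i)
  else 0.
Proof.
move=> size0 adm0; elim=> [|n IH] hy hT /=.
  by rewrite addn0 in hT; rewrite hT -size0 take_size big_geq //; case: eqP.
have hy_lt : (size hy < T)%N by lia.
transitivity (\sum_(y <- trace_support (size hy).+1)
   trace_pmf (th (trace_action hy)) (size hy).+1 y *
   (if (hy == take (size hy) ys0) && (y == nth None ys0 (size hy)) then
      \prod_((size hy).+1 <= i < T) trace_pmf (th (trace_action (take i ys0))) i.+1 (nth None ys0 i)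
    else 0)).
  apply: eq_bigr => y _; rewrite IH ?size_rcons ?addSnnS //.
  by rewrite (take_nth None) ?size0 // eqseq_rcons.
have [hy_pre|_] := eqVneq hy (take (size hy) ys0); last by rewrite big1 // => y _; rewrite mulr0.
rewrite (bigD1_seq (nth None ys0 (size hy))) ?uniq_trace_support //=; last first.
  by apply/admissible_at_support/adm0; rewrite size0.
rewrite eqxx [X in _ + X]big1 ?addr0; last by move=> y /negbTE ->; rewrite mulr0.
by rewrite [in RHS]big_ltn // -hy_pre.
Qed.

Lemma lik_untrace th ys0 : size ys0 = T -> admissible ys0 ->
  lik pol model th tau T (obs_upto model (untrace ys0) T) =
  \prod_(0 <= i < T) trace_pmf (th (trace_action (take i ys0))) i.+1 (nth None ys0 i).
Proof.
move=> size0 adm0; rewrite /lik /ExpT (@Exp_ExpTrace _ _ _ T [::]) //; last first.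
  by move=> w _; rewrite /= obs_upto_untrace_trace.
rewrite (@eq_in_ExpTrace _ _ (fun ys => ((ys == ys0) : nat)%:R)) //.
  by rewrite ExpTrace_indicator //= take0 eqxx.
move=> ys sizeT adm /=; congr ((nat_of_bool _)%:R); apply/eqP/eqP => [|-> //].
exact: obs_upto_untrace_inj.
Qed.

Lemma ExpTrace_sum_centered th (F : seq (option nat) -> option nat -> R) :
  (forall hy, \sum_(y <- trace_support (size hy).+1)
     trace_pmf (th (trace_action hy)) (size hy).+1 y * F hy y = 0) ->
  forall n hy, (size hy + n = T)%N ->
  ExpTrace th (fun ys => \sum_(0 <= i < T) F (take i ys) (nth None ys i)) n hy
  = \sum_(0 <= i < size hy) F (take i hy) (nth None hy i).
Proof.
move=> centered; elim=> [|n IH] hy hT /=; first by rewrite -hT addn0.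
set S := \sum_(0 <= i < size hy) _.
transitivity (\sum_(y <- trace_support (size hy).+1)
   trace_pmf (th (trace_action hy)) (size hy).+1 y * (S + F hy y)).
  apply: eq_bigr => y _; rewrite IH ?size_rcons ?addSnnS //.
  rewrite big_nat_recr //= -cats1 take_size_cat // nth_cat ltnn subnn.
  congr (_ * (_ + _)); apply: eq_big_nat => i /andP[_ hi].
  by rewrite takel_cat ?nth_cat ?hi // ltnW.
under eq_bigr do rewrite mulrDr.
by rewrite big_split /= -big_distrl /= sum_trace_pmf mul1r centered addr0.
Qed.

Lemma ExpT_llr th th' : (forall i, 0 < th i < 1) -> (forall i, 0 < th' i < 1) ->
  ExpT pol model th tau T (llr pol model th th' tau T) =
  ExpT pol model th tau T (fun w => \sum_(1 <= s < T.+1)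
    kl (th (action pol model w s) * tau (horizon s))
       (th' (action pol model w s) * tau (horizon s))).
Proof.
move=> th_in th'_in; set g := (X in _ = ExpT _ _ _ _ _ X).
pose F hy y := let a := trace_action hy in let s := (size hy).+1 in
  ln (trace_pmf (th a) s y / trace_pmf (th' a) s y)
  - kl (th a * tau (horizon s)) (th' a * tau (horizon s)).
have F_centered hy : \sum_(y <- trace_support (size hy).+1)
    trace_pmf (th (trace_action hy)) (size hy).+1 y * F hy y = 0.
  under eq_bigr do rewrite mulrBr.
  by rewrite sumrB trace_kl -big_distrl /= sum_trace_pmf mul1r subrr.
have llr_untrace ys : size ys = T -> admissible ys ->
    llr pol model th th' tau T (untrace ys)
    = g (untrace ys) + \sum_(0 <= i < T) F (take i ys) (nth None ys i).
  move=> sizeT adm; rewrite /llr !lik_untrace // -prodf_div ln_prod; last first.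
    move=> i; rewrite mem_index_iota -sizeT => /andP[_ lt_i].
    by apply: divr_gt0; apply: trace_pmf_gt0; rewrite ?adm.
  rewrite /g big_add1 /= -big_split /=; apply: eq_big_nat => i /andP[_ lt_i].
  by rewrite action_untrace /F ?size_takel ?sizeT 1?ltnW //=; ring.
rewrite /ExpT !Exp_ExpTrace //; first last.
- by move=> w wT; rewrite /llr obs_upto_untrace_trace.
- move=> w wT; apply: eq_big_nat => s /andP[_ sT].
  by rewrite /action obs_upto_untrace_trace //; lia.
rewrite (eq_in_ExpTrace _ _ _ llr_untrace) // ExpTraceD ExpTrace_sum_centered //=.
by rewrite big_geq ?addr0.
Qed.

End Traces.

Theorem lemma2 (R : realType) (K T : nat) (tau : nat -> R)
  (tau0 : 0 <= tau 0%N) (tau_mono : forall d, tau d <= tau d.+1)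
  (tau_le1 : forall d, tau d <= 1) (tau_cvg : (tau @ \oo --> (1 : R)%R)%classic)
  (theta theta' : 'I_K -> R)
  (htheta : forall i, 0 < theta i < 1) (htheta' : forall i, 0 < theta' i < 1)
  (pol : policy K) :
  (forall m : nat, (1 <= m)%N ->
     ExpT pol (Some m) theta tau T (llr pol (Some m) theta theta' tau T) =
     ExpT pol (Some m) theta tau T (fun w =>
       \sum_(1 <= s < (T - m).+1)
          kl (theta (action pol (Some m) w s) * tau m)
             (theta' (action pol (Some m) w s) * tau m)
     + \sum_((T - m).+1 <= s < T.+1)
          kl (theta (action pol (Some m) w s) * tau (T - s)%N)
             (theta' (action pol (Some m) w s) * tau (T - s)%N)))
  /\
  ExpT pol None theta tau T (llr pol None theta theta' tau T) =
  ExpT pol None theta tau T (fun w =>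
    \sum_(1 <= s < T.+1)
       kl (theta (action pol None w s) * tau (T - s)%N)
          (theta' (action pol None w s) * tau (T - s)%N)).
Proof.
split; last exact: ExpT_llr.
move=> m _; rewrite ExpT_llr //; congr ExpT; apply: funext => w.
rewrite (big_cat_nat _ (n := (T - m).+1)) //=; last lia.
by congr (_ + _); apply: eq_big_nat => s /andP[s_ge s_lt]; rewrite /horizon;
  [have -> : minn m (T - s) = m by lia | have -> : minn m (T - s) = (T - s)%N by lia].
Qed.
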